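(* Consider $n$ single photons, one in each of $n$ modes, whose joint state is $\rho^{\otimes n}$ where each photon's state is $\rho=(1-\epsilon)\rho_{\mathrm{id}}+\epsilon\rho_{\mathrm{dist}}$ in the orthogonal-bad-bit model. Then the probability of obtaining a valid pattern after the $n$-mode Fourier interferometer followed by photon-number-resolving detection is $$\Big(1-\frac1n\Big)(1-\epsilon)^n+\frac1n.$$
   Context: Orthogonal-bad-bit (OBB) model: with probability $1-\epsilon$ a photon is in a fixed common internal state ($\rho_{\mathrm{id}}$, identical for all photons), and with probability $\epsilon$ it is in an internal state ($\rho_{\mathrm{dist}}$) orthogonal to the internal states of all other photons. Modes are labelled $0,\dots,n-1$; the Fourier interferometer acts on external modes only via $\hat a_r^\dagger[\xi]\mapsto\frac1{\sqrt n}\sum_{j=0}^{n-1}\omega^{-rj}\hat a_j^\dagger[\xi]$, $\omega=e^{2\pi i/n}$, where $\hat a_i^\dagger[\xi]$ creates a photon in mode $i$ with internal state $\xi$. Detectors resolve photon number per external mode but not internal states. A pattern $(s_0,\dots,s_{n-1})$ is valid if $\sum_i i\,s_i\equiv0\pmod n$. *)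

From HB Require Import structures.
From mathcomp Require Import all_boot all_order all_algebra.
From mathcomp Require Import reals trigo.
From mathcomp Require Import complex.
Set Implicit Arguments. Unset Strict Implicit. Unset Printing Implicit Defensive.
Import Order.TTheory GRing.Theory Num.Theory.
Local Open Scope ring_scope.
Local Open Scope complex_scope.

Section OBB.
Variables (R : realType) (n : nat).

Definition omega : R[i] :=
  Complex (cos (2 * pi / n%:R)) (sin (2 * pi / n%:R)).

(* Fourier interferometer: a_r^dag[xi] |-> 1/sqrt n sum_j omega^{-rj} a_j^dag[xi];
   U j r is the amplitude from input mode r to output mode j. *)
Definition fourierU (j r : 'I_n) : R[i] :=
  ((Num.sqrt (n%:R : R))^-1)%:C * omega ^- (r * j).

(* Internal-state labels of the photons (orthonormal internal basis states):
   for a set S of "bad" photons, photon k (input in mode k) has the common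
   internal state xi_0 (rho_id) if k \notin S, and the private internal state
   xi_{k+1}, orthogonal to all others, if k \in S. *)
Definition label (S : {set 'I_n}) (k : 'I_n) : 'I_n.+1 :=
  if k \in S then lift ord0 k else ord0.

(* Fock occupation numbers (output mode, internal label) produced by sending
   photon k to output mode f k. *)
Definition occ (S : {set 'I_n}) (f : {ffun 'I_n -> 'I_n}) :
  {ffun 'I_n * 'I_n.+1 -> nat} :=
  [ffun p => #|[set k | (f k == p.1) && (label S k == p.2)]|].

(* Expanding prod_k (sum_j U_{j,k} a_j^dag[xi_{label k}]) |0>, the output Fock
   state |m> has amplitude sqrt(prod m!) * amp S m. *)
Definition amp (S : {set 'I_n}) (m : {ffun 'I_n * 'I_n.+1 -> nat}) : R[i] :=
  \sum_(f : {ffun 'I_n -> 'I_n} | occ S f == m) \prod_(k < n) fourierU (f k) k.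

Definition fockweight (m : {ffun 'I_n * 'I_n.+1 -> nat}) : R :=
  \prod_(p : 'I_n * 'I_n.+1) ((m p)`!)%:R.

Definition normsq (z : R[i]) : R := (complex.Re z) ^+ 2 + (complex.Im z) ^+ 2.

(* detectors resolve photon number per external mode only *)
Definition pattern (m : {ffun 'I_n * 'I_n.+1 -> nat}) (j : 'I_n) : nat :=
  \sum_(l < n.+1) m (j, l).

Definition valid_pattern (s : 'I_n -> nat) : bool :=
  ((\sum_(i < n) i * s i) %% n == 0)%N.

Definition prob_valid_pure (S : {set 'I_n}) : R :=
  \sum_(m <- undup [seq occ S f | f <- enum {: {ffun 'I_n -> 'I_n}}]
         | valid_pattern (pattern m))
     fockweight m * normsq (amp S m).

(* rho^{(x) n} with rho = (1-eps) rho_id + eps rho_dist: mixture over the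
   set S of photons in the distinguishable state. *)
Definition prob_valid_OBB (eps : R) : R :=
  \sum_(S : {set 'I_n}) eps ^+ #|S| * (1 - eps) ^+ (n - #|S|) * prob_valid_pure S.

End OBB.

(* A path f : 'I_n -> 'I_n sends photon k to output mode f k with amplitude
   A(f) = prod_k U(f k, k).  For a pure input whose distinguishable photons form
   the set S, all paths f \o s, with s permuting photons of equal internal label,
   produce the same Fock state, and its weight prod m! is the number of such s
   fixing f; hence  P(S) = sum_(valid f) sum_s A(f) * conj A(f \o s).  Writing the
   validity constraint  n | sum_k f k  as  1/n sum_t omega^(t * sum_k f k),  the sum
   over paths factorises into orthogonality relations of the Fourier matrix, which
   force s to be the cyclic shift by t.  So P(S) is 1/n times the number of cyclic
   shifts preserving the internal labels: all n of them when S is empty, only the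
   identity otherwise, since a distinguishable photon must stay in place.
   Averaging 1 and 1/n over the binomial law of S gives the formula. *)

From HB Require Import structures.
From mathcomp Require Import all_boot all_order all_algebra all_fingroup.
From mathcomp Require Import reals trigo complex.
From mathcomp Require Import ring lra.
Import Order.TTheory GRing.Theory Num.Theory.
Set Implicit Arguments. Unset Strict Implicit. Unset Printing Implicit Defensive.
Local Open Scope complex_scope.
Local Open Scope ring_scope.

Section Transporters.
Local Open Scope nat_scope.
Variables T P : finType.
Implicit Types (key : T -> P) (A : {set T}).

Definition fibre_card key A p := #|[set k in A | key k == p]|.

Definition transporter key1 key2 : {set {perm T}} :=
  [set s : {perm T} | [forall k, key1 (s k) == key2 k]].

Definition key_stab key A : {set {perm T}} :=
  [set s : {perm T} | perm_on A s && [forall k, key (s k) == key k]].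

Lemma key_stab_group_set key A : group_set (key_stab key A).
Proof.
apply/group_setP; split=> [|s t]; rewrite !inE.
  by rewrite perm_on1; apply/forallP => k; rewrite perm1.
move=> /andP[sA /forallP sk] /andP[tA /forallP tk].
rewrite perm_onM //; apply/forallP => k.
by rewrite permM (eqP (tk _)) sk.
Qed.

Canonical key_stab_group key A := Group (key_stab_group_set key A).

Lemma orbit_key_stab key A x : x \in A ->
  orbit 'P (key_stab key A) x = [set y in A | key y == key x].
Proof.
move=> xA; apply/setP => y; rewrite inE; apply/orbitP/andP => [[s] | [yA /eqP kyx]].
  by rewrite inE /= => /andP[sA /forallP sk] <-; rewrite (perm_closed _ sA) xA sk.
exists (tperm x y); last exact: tpermL.
rewrite inE; apply/andP; split.
  by apply: subset_trans (tperm_on x y) _; apply/subsetP => z /set2P[]->.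
by apply/forallP => k; case: tpermP => [->|->|] //; rewrite kyx.
Qed.

Lemma astab1_key_stab key A x :
  ('C_(key_stab key A)[x | 'P])%g = key_stab key (A :\ x).
Proof.
apply/setP => s; rewrite inE; apply/andP/idP => [[+ /astab1P sx]|].
  rewrite !inE => /andP[sA ->]; rewrite andbT.
  apply/subsetP => z; rewrite !inE => szz; rewrite (subsetP sA) // andbT.
  by apply: contraNneq szz => ->; apply/eqP.
rewrite inE => /andP[sAx sk]; split; last first.
  by apply/astab1P; apply: (out_perm sAx); rewrite !inE eqxx.
by rewrite inE sk andbT; apply: subset_trans sAx (subsetDl _ _).
Qed.

Lemma fibre_cardD1 key A x p : x \in A ->
  fibre_card key A p = (key x == p) + fibre_card key (A :\ x) p.
Proof.
move=> xA; rewrite /fibre_card (cardsD1 x) !inE xA /=; congr (_ + _).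
by apply: eq_card => k; rewrite !inE andbA.
Qed.

Lemma card_key_stab key A : #|key_stab key A| = \prod_p (fibre_card key A p)`!.
Proof.
have [m] := ubnP #|A|; elim: m A => // m IHm A.
have [-> _ |/set0Pn[x xA] ltAm] := eqVneq A set0.
  rewrite big1 => [|p _]; last first.
    suff -> : fibre_card key set0 p = 0 by [].
    by apply/eqP; rewrite cards_eq0; apply/set0Pn => -[k]; rewrite !inE.
  apply/eqP/cards1P; exists 1%g; apply/setP => s; rewrite !inE.
  apply/andP/eqP => [[s0 _]|->]; first by rewrite (perm_on_id s0) ?cards0.
  by rewrite perm_on1; split=> //; apply/forallP => k; rewrite perm1.
rewrite -(card_orbit_stab 'P (key_stab_group key A) x) orbit_key_stab //.
rewrite astab1_key_stab IHm; last by rewrite (cardsD1 x) xA in ltAm.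
rewrite -/(fibre_card key A (key x)) (fibre_cardD1 _ _ xA) eqxx.
rewrite (bigD1 (key x)) //= [RHS](bigD1 (key x)) //= (fibre_cardD1 _ _ xA) eqxx.
rewrite mulnA add1n -factS; congr (_ * _); apply: eq_bigr => p /negbTE kp.
by rewrite (fibre_cardD1 _ _ xA) eq_sym kp.
Qed.

Lemma fibre_card_perm_on key A t p : perm_on A t ->
  fibre_card (key \o t) A p = fibre_card key A p.
Proof.
move=> tA; rewrite /fibre_card -[RHS](card_preimset _ (@perm_inj _ t)).
by apply: eq_card => k; rewrite !inE (perm_closed _ tA).
Qed.

Lemma perm_onT (s : {perm T}) : perm_on [set: T] s.
Proof. by apply/subsetP => x; rewrite inE. Qed.

Lemma exists_perm_on_transport A key1 key2 :
  {in ~: A, key1 =1 key2} -> fibre_card key1 A =1 fibre_card key2 A ->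
  exists2 s, perm_on A s & forall k, key1 (s k) = key2 k.
Proof.
have [m] := ubnP #|A|; elim: m A key1 => // m IHm A key1 ltAm key12 fib12.
have [A0|/set0Pn[x xA]] := eqVneq A set0.
  by exists 1%g => [|k]; [exact: perm_on1 | rewrite perm1 key12 // A0 !inE].
have /card_gt0P[y]: 0 < fibre_card key1 A (key2 x).
  by rewrite fib12 (fibre_cardD1 _ _ xA) eqxx.
rewrite inE => /andP[yA /eqP key1y]; pose t := tperm x y.
have tA : perm_on A t.
  by apply: subset_trans (tperm_on x y) _; apply/subsetP => z /set2P[]->.
have [|z|p|s' sAx s'key] := IHm (A :\ x) (key1 \o t).
- by rewrite (cardsD1 x) xA in ltAm.
- rewrite !inE negb_and negbK => /orP[/eqP->|zA]; first by rewrite /= tpermL.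
  by rewrite /= tpermD ?key12 ?inE //; apply: contraNneq zA => <-.
- apply/eqP; rewrite -(eqn_add2l (key2 x == p)) -[X in _ == X](fibre_cardD1 _ _ xA).
  by rewrite -fib12 -(fibre_card_perm_on _ _ tA) (fibre_cardD1 _ _ xA) /= tpermL key1y.
exists (s' * t)%g => [|k]; last by rewrite permM -s'key.
by apply: perm_onM tA; apply: subset_trans sAx (subsetDl _ _).
Qed.

Lemma transporter_lcoset key1 key2 s0 : s0 \in transporter key1 key2 ->
  transporter key1 key2 = (s0 *: key_stab key1 [set: T])%g.
Proof.
rewrite inE => /forallP s0key; apply/setP => s; rewrite mem_lcoset !inE perm_onT /=.
apply/forallP/forallP => skey k.
  by rewrite permM (eqP (skey _)) -(eqP (s0key _)) permKV.
by have := skey (s0 k); rewrite permM permK (eqP (s0key k)).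
Qed.

Lemma card_transporter key1 key2 :
  #|transporter key1 key2| =
  if [forall p, fibre_card key1 [set: T] p == fibre_card key2 [set: T] p]
  then \prod_p (fibre_card key1 [set: T] p)`! else 0.
Proof.
case: ifPn => [/forallP fib12 | /forallPn[p /eqP fib12]].
  have [k|p|s _ skey] := @exists_perm_on_transport [set: T] key1 key2.
  - by rewrite !inE.
  - exact/eqP.
  rewrite (transporter_lcoset (s0 := s)) ?card_lcoset ?card_key_stab //.
  by rewrite inE; apply/forallP => k; rewrite skey.
apply/eqP; rewrite cards_eq0; apply/eqP/setP => s; rewrite !inE.
apply/forallP => skey; apply: fib12; rewrite -(fibre_card_perm_on _ _ (perm_onT s)).
by apply: eq_card => k; rewrite !inE /= (eqP (skey k)).
Qed.
End Transporters.

Lemma sum_expr_unity_root (R : idomainType) (n : nat) (x : R) : x ^+ n = 1 ->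
  \sum_(j < n) x ^+ j = (x == 1)%:R * n%:R.
Proof.
move=> xn1; have [->|x_neq1] := eqVneq x 1.
  by under eq_bigr do rewrite expr1n; rewrite sumr_const card_ord mul1r.
apply: (mulfI (x := x - 1)); first by rewrite subr_eq0.
by rewrite -subrX1 xn1 subrr !mul0r mulr0.
Qed.

Lemma normsqE (R : realType) (z : R[i]) : (normsq z)%:C = z * z^*.
Proof.
by rewrite -normCK normc_def -rmorphXn sqr_sqrtr // addr_ge0 ?sqr_ge0.
Qed.

Section Fourier.
Variables (R : realType) (n : nat).
Local Notation N := n.+1.
Local Notation w := (omega R N).
Local Notation theta := (2 * pi / N%:R : R).

Lemma omegaX k : w ^+ k = cos (theta *+ k) +i* sin (theta *+ k).
Proof.
elim: k => [|k IHk]; first by rewrite expr0 mulr0n cos0 sin0.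
rewrite exprS IHk !(mulrS _ k) cosD sinD /omega; apply/eqP; rewrite eq_complex /=.
by apply/andP; split; apply/eqP; ring.
Qed.

Lemma omega_prim_root : N.-primitive_root w.
Proof.
have N_gt0 : 0 < N%:R :> R by rewrite ltr0n.
apply/andP; split=> //; apply/forallP => -[k] /=; rewrite ltnS unity_rootE omegaX.
rewrite leq_eqVlt => /orP[/eqP-> | ltkN]; apply/eqP.
  rewrite eqxx; apply/eqP.
  have -> : theta *+ N = pi *+ 2 by rewrite -[LHS]mulr_natr divfK ?mulr_natl // gt_eqF.
  by rewrite cos2pi sin2pi.
rewrite eqSS (ltn_eqF ltkN); apply/eqP => -[+ _].
have half_angle : theta *+ k.+1 = (pi * k.+1%:R / N%:R : R) *+ 2.
  by rewrite -mulr_natr -mulr_natl; field; rewrite addrC natr1 pnatr_eq0.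
have sin_gt0 : 0 < sin (pi * k.+1%:R / N%:R : R).
  apply: sin_gt0_pi; rewrite divr_gt0 ?mulr_gt0 ?pi_gt0 ?ltr0n //=.
  by rewrite ltr_pdivrMr // ltr_pM2l ?pi_gt0 // ltr_nat ltnS.
rewrite half_angle cos_mulr2n cos2sin2; move: sin_gt0; set s := sin _ => s_gt0.
by rewrite !mulr2n; nra.
Qed.

Lemma omega_neq0 : w != 0.
Proof. by rewrite (prim_root_eq0 omega_prim_root). Qed.

Lemma conjC_omegaX k : (w ^+ k)^* = w ^- k.
Proof.
apply: (mulfI (expf_neq0 k omega_neq0)); rewrite mulfV ?expf_neq0 ?omega_neq0 //.
by rewrite -normsqE omegaX /normsq /= cos2Dsin2.
Qed.

Lemma conjC_omegaV k : (w ^- k)^* = w ^+ k.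
Proof. by rewrite fmorphV /= conjC_omegaX invrK. Qed.

Lemma dvdn_indicator_omega e :
  ((N %| e)%:R : R[i]) = N%:R^-1 * \sum_(t < N) w ^+ (t * e).
Proof.
under eq_bigr do rewrite mulnC exprM.
rewrite sum_expr_unity_root; last first.
  by rewrite -exprM mulnC exprM (prim_expr_order omega_prim_root) expr1n.
by rewrite -(prim_order_dvd omega_prim_root) mulrCA mulVf ?mulr1 ?pnatr_eq0.
Qed.

Lemma omega_div_eq1 a b : (w ^+ a / w ^+ b == 1) = (a == b %[mod N]).
Proof.
rewrite -(eq_prim_root_expr omega_prim_root).
apply/eqP/eqP => [/divr1_eq //|->]; exact/divff/expf_neq0/omega_neq0.
Qed.

Lemma fourier_orthogonality (t k m : 'I_N) :
  \sum_(j < N) w ^+ (t * j) * fourierU R j k * (fourierU R j m)^* = ((t + m)%R == k)%:R.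
Proof.
set c := ((Num.sqrt (N%:R : R))^-1)%:C.
have c_conj : c^* = c by rewrite geC0_conj // ler0c invr_ge0 sqrtr_ge0.
have c2 : c * c = N%:R^-1.
  by rewrite -rmorphM -invfM -expr2 sqr_sqrtr ?ler0n // fmorphV rmorph_nat.
pose x := w ^+ (t + m) / w ^+ k.
have x_unity : x ^+ N = 1.
  rewrite exprMn exprVn -!exprM !(mulnC _ N) !exprM.
  by rewrite (prim_expr_order omega_prim_root) !expr1n invr1 mulr1.
transitivity (N%:R^-1 * \sum_(j < N) x ^+ j).
  rewrite mulr_sumr; apply: eq_bigr => j _.
  rewrite /fourierU -/c rmorphM /= c_conj conjC_omegaV -c2 /x.
  rewrite exprMn exprVn -!exprM mulnDl exprD.
  by ring.
rewrite sum_expr_unity_root // mulrCA mulVf ?mulr1 ?pnatr_eq0 // omega_div_eq1.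
by rewrite (modn_small (ltn_ord k)).
Qed.
End Fourier.

Lemma big_undup_fibres (V : nmodType) (T : finType) (M : eqType) (h : T -> M)
    (P : pred M) (F : T -> V) :
  \sum_(m <- undup [seq h x | x <- enum T] | P m) \sum_(x | h x == m) F x =
  \sum_(x | P (h x)) F x.
Proof.
rewrite (exchange_big_dep predT) //= [RHS]big_mkcond /=; apply: eq_bigr => x _.
rewrite big_mkcond (bigD1_seq (h x)) ?undup_uniq //=; last first.
  by rewrite mem_undup; apply: map_f; rewrite mem_enum.
by rewrite eqxx andbT big1 ?addr0 // => m /negbTE mh; rewrite eq_sym mh andbF.
Qed.

Lemma prodr_indicator (R : comPzSemiRingType) (I : finType) (P : pred I) :
  \prod_i ((P i)%:R : R) = [forall i, P i]%:R.
Proof.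
case: forallP => [P_all | /forallP/forallPn[i /negbTE Pi]].
  by rewrite big1 // => i _; rewrite P_all.
by rewrite (bigD1 i) //= Pi mul0r.
Qed.

Lemma sumr_indicator_eq (R : pzSemiRingType) (I : finType) (A : {pred I}) (x : I) :
  \sum_(i in A) ((i == x)%:R : R) = (x \in A)%:R.
Proof.
rewrite big_mkcond (bigD1 x) //= eqxx big1 ?addr0 => [|i /negbTE->]; last by rewrite if_same.
by case: (x \in A).
Qed.

Lemma sumr_indicator (R : pzSemiRingType) (I : finType) (P : pred I) :
  \sum_i ((P i)%:R : R) = #|P|%:R.
Proof.
rewrite -sum1_card natr_sum [RHS]big_mkcond; apply: eq_bigr => i _.
by rewrite unfold_in; case: (P i).
Qed.

Definition shift_perm n (t : 'I_n.+1) : {perm 'I_n.+1} := perm (addIr t).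

Lemma shift_permE n (t k : 'I_n.+1) : shift_perm t k = k + t.
Proof. exact: permE. Qed.

Lemma shift_perm_eq n (s : {perm 'I_n.+1}) (t : 'I_n.+1) :
  [forall k, t + (s^-1)%g k == k] = (s == shift_perm t).
Proof.
apply/forallP/eqP => [s_shift | ->] /=.
  by apply/permP => j; rewrite shift_permE addrC; have /eqP := s_shift (s j); rewrite permK.
by move=> k; rewrite -{2}(permKV (shift_perm t) k) shift_permE addrC.
Qed.

Section PureInput.
Variables (R : realType) (n : nat) (S : {set 'I_n.+1}).
Local Notation N := n.+1.
Local Notation w := (omega R N).
Local Notation path := {ffun 'I_N -> 'I_N}.
Local Notation label_stab := (transporter (label S) (label S)).

Definition path_amp (f : path) : R[i] := \prod_(k < N) fourierU R (f k) k.

Definition photon_key (f : path) (k : 'I_N) : 'I_N * 'I_N.+1 := (f k, label S k).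

Definition permute_path (f : path) (s : {perm 'I_N}) : path := [ffun k => f (s k)].

Lemma occE f : occ S f =1 fibre_card (photon_key f) [set: 'I_N].
Proof. by move=> [j l]; rewrite ffunE; apply: eq_card => k; rewrite !inE. Qed.

Lemma valid_pattern_occ f : valid_pattern (pattern (occ S f)) = (N %| \sum_(k < N) f k)%N.
Proof.
rewrite /valid_pattern /dvdn; congr (_ %% _ == _)%N.
have pattern_f j : pattern (occ S f) j = (\sum_(k < N) (f k == j))%N.
  rewrite /pattern; under eq_bigr do rewrite ffunE /= -sum1_card big_mkcond /=.
  rewrite exchange_big /=; apply: eq_bigr => k _; under eq_bigr do rewrite inE.
  rewrite (bigD1 (label S k)) //= eqxx andbT big1 ?addn0 // => l /negbTE.
  by rewrite eq_sym andbC => ->.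
under eq_bigr do rewrite pattern_f big_distrr /=.
rewrite exchange_big /=; apply: eq_bigr => k _.
rewrite (bigD1 (f k)) //= eqxx muln1 big1 ?addn0 // => j /negbTE.
by rewrite eq_sym => ->; rewrite muln0.
Qed.

Lemma card_label_stab_paths f g :
  #|[set s in label_stab | permute_path f s == g]| =
  if occ S f == occ S g then (\prod_p (occ S f p)`!)%N else 0%N.
Proof.
have -> : [set s in label_stab | permute_path f s == g] =
          transporter (photon_key f) (photon_key g).
  apply/setP => s; rewrite !inE; apply/andP/forallP => [[/forallP sl /eqP <-] k|sk].
    by rewrite /photon_key /permute_path ffunE xpair_eqE eqxx sl.
  split; first by apply/forallP => k; have /andP[_ ->] := sk k.
  by apply/eqP/ffunP => k; rewrite ffunE; have /andP[/eqP] := sk k.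
rewrite card_transporter.
have -> : [forall p, fibre_card (photon_key f) [set: 'I_N] p ==
                    fibre_card (photon_key g) [set: 'I_N] p] = (occ S f == occ S g).
  apply/forallP/eqP => [eq_fib | eq_occ p]; last by rewrite -!occE eq_occ.
  by apply/ffunP => p; rewrite !occE; apply/eqP.
by under eq_bigr do rewrite -occE.
Qed.

(* The Fock weight of occ S f is the number of label-preserving permutations of
   the photons that fix the path f: this is where indistinguishability enters. *)
Lemma fockweight_sum_class f (Y : path -> R[i]) :
  (fockweight R (occ S f))%:C * \sum_(g | occ S g == occ S f) Y g =
  \sum_(s in label_stab) Y (permute_path f s).
Proof.
rewrite (partition_big (permute_path f) predT) //= mulr_sumr big_mkcond /=.
apply: eq_bigr => g _; rewrite (eq_bigr (fun=> Y g)) => [|s /andP[_ /eqP <-] //].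
rewrite (eq_bigl (mem [set s in label_stab | permute_path f s == g])) => [|s]; last first.
  by rewrite !inE.
rewrite sumr_const card_label_stab_paths eq_sym -mulr_natl; case: eqP => _; rewrite ?mul0r //.
by rewrite /fockweight rmorph_prod natr_prod; under eq_bigr do rewrite rmorph_nat.
Qed.

Lemma prob_valid_pure_paths :
  (prob_valid_pure R S)%:C =
  \sum_(f : path | (N %| \sum_(k < N) f k)%N)
     \sum_(s in label_stab) path_amp f * (path_amp (permute_path f s))^*.
Proof.
rewrite /prob_valid_pure rmorph_sum /=.
rewrite [RHS](eq_bigl (fun f => valid_pattern (pattern (occ S f)))) => [|f]; last first.
  by rewrite valid_pattern_occ.
rewrite -(big_undup_fibres (occ S) (fun m => valid_pattern (pattern m))).
apply: eq_bigr => m _.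
rewrite rmorphM /= normsqE mulrCA {1}/amp mulr_suml; apply: eq_bigr => f /eqP <-.
by rewrite /amp rmorph_sum fockweight_sum_class mulr_sumr.
Qed.

Lemma path_sum_factor (s : {perm 'I_N}) (t : 'I_N) :
  \sum_(f : path) w ^+ (t * \sum_(k < N) f k) * path_amp f * (path_amp (permute_path f s))^* =
  \prod_(k < N) ((t + (s^-1)%g k)%R == k)%:R.
Proof.
under [RHS]eq_bigr do rewrite -fourier_orthogonality.
rewrite bigA_distr_bigA /=; apply: eq_bigr => f _.
rewrite big_split big_split /=; congr (_ * _ * _); first by rewrite big_distrr /= expr_sum.
rewrite /path_amp rmorph_prod (reindex_perm (s^-1)%g) /=.
by apply: eq_bigr => k _; rewrite ffunE permKV.
Qed.

Lemma prob_valid_pure_shifts :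
  prob_valid_pure R S = #|[set t : 'I_N | shift_perm t \in label_stab]|%:R / N%:R.
Proof.
apply: (@complexI R); rewrite prob_valid_pure_paths big_mkcond /=.
transitivity (N%:R^-1 * \sum_(f : path) \sum_(t < N) \sum_(s in label_stab)
    w ^+ (t * \sum_(k < N) f k) * path_amp f * (path_amp (permute_path f s))^*).
  rewrite mulr_sumr; apply: eq_bigr => f _.
  rewrite -mulrb -[_ *+ nat_of_bool _]mulr_natl dvdn_indicator_omega -mulrA mulr_suml.
  congr (_ * _); apply: eq_bigr => t _.
  by rewrite mulr_sumr; apply: eq_bigr => s _; rewrite !mulrA.
rewrite exchange_big /=; under eq_bigr do rewrite exchange_big /=.
under eq_bigr do under eq_bigr do rewrite path_sum_factor prodr_indicator shift_perm_eq.
under eq_bigr do rewrite sumr_indicator_eq.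
by rewrite sumr_indicator -cardsE rmorphM /= fmorphV !rmorph_nat mulrC.
Qed.

End PureInput.

Lemma card_label_preserving_shifts n (S : {set 'I_n.+1}) :
  #|[set t : 'I_n.+1 | shift_perm t \in transporter (label S) (label S)]| =
  if S == set0 then n.+1 else 1%N.
Proof.
case: eqP => [->|/eqP/set0Pn[k0 k0S]].
  rewrite -[RHS](card_ord n.+1) -cardsT; apply: eq_card => t; rewrite !inE.
  by apply/forallP => k; rewrite /label !inE.
apply/eqP/cards1P; exists 0; apply/setP => t; rewrite !inE.
apply/forallP/eqP => [/(_ k0)|-> k]; last by rewrite shift_permE addr0.
rewrite shift_permE /label k0S; case: ifP => _ /eqP; last first.
  by move=> e; have := neq_lift ord0 k0; rewrite -e eqxx.
by move=> /lift_inj e; apply: (addrI k0); rewrite e addr0.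
Qed.

Lemma prob_valid_pureE (R : realType) n (S : {set 'I_n.+1}) :
  prob_valid_pure R S = if S == set0 then 1 else n.+1%:R^-1.
Proof.
rewrite prob_valid_pure_shifts card_label_preserving_shifts.
by case: eqP => _; rewrite ?mul1r // divff ?pnatr_eq0.
Qed.

Lemma sum_subsets_binomial (R : comPzSemiRingType) (I : finType) (x y : R) :
  \sum_(A : {set I}) x ^+ #|A| * y ^+ (#|I| - #|A|) = (x + y) ^+ #|I|.
Proof.
rewrite -prodr_const bigA_distr; apply: eq_bigr => A _.
rewrite (bigID (mem A)) /=; congr (_ * _).
  by rewrite -prodr_const; apply: eq_bigr => i ->.
by rewrite -(cardC A) addKn -prodr_const; apply: eq_bigr => i /negbTE ->.
Qed.

Theorem corollary1 (R : realType) (n : nat) (eps : R) :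
  (0 < n)%N -> 0 <= eps <= 1 ->
  prob_valid_OBB n eps = (1 - n%:R^-1) * (1 - eps) ^+ n + n%:R^-1.
Proof.
case: n => [//|n] _ _.
set w := fun S : {set 'I_n.+1} => eps ^+ #|S| * (1 - eps) ^+ (n.+1 - #|S|).
have w_set0 : w set0 = (1 - eps) ^+ n.+1 by rewrite /w cards0 expr0 mul1r subn0.
have w_sum : \sum_S w S = 1.
  by have := @sum_subsets_binomial _ 'I_n.+1 eps (1 - eps); rewrite card_ord subrKC expr1n.
rewrite /prob_valid_OBB (bigD1 set0) //= prob_valid_pureE eqxx mulr1 -/(w set0) w_set0.
under eq_bigr => S /negbTE S_neq0 do rewrite prob_valid_pureE S_neq0 -/(w S).
rewrite -mulr_suml; move: w_sum; rewrite (bigD1 set0) //= w_set0 => w_sum.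
have -> : \sum_(S | S != set0) w S = 1 - (1 - eps) ^+ n.+1 by lra.
by ring.
Qed.
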